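(* Let $r\ge 2$ be an integer, $\overline{x}\in\mathbb{R}^n$, let $f:\mathbb{R}^n\to\mathbb{R}$ be of class $C^r$ on an open neighbourhood $V$ of $\overline{x}$, and set $\Sigma:=\{x\in V\mid\nabla f(x)=0\}$. Let $c,\delta,\overline{w}>0$ satisfy $$\|\nabla f(x)\|\ge c\,\mathrm{dist}(x,\Sigma)^{r-1}\quad\text{for all }x\in\mathcal{H}_r^{\Sigma}(f,\overline{x};\overline{w})\cap\mathbb{B}_\delta(\overline{x}).$$ If $f$ has a local minimum at $\overline{x}$, then there exists $\epsilon>0$ such that for every function $h:\mathbb{R}^n\to\mathbb{R}$ for which there is $\rho>0$ with $|h(x)-h(\overline{x})|\le\epsilon\,\|\nabla f(x)\|^r$ for all $x\in\mathbb{B}_\rho(\overline{x})$, the function $f+h$ has a local minimum at $\overline{x}$.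
   Context: $\mathbb{B}_\delta(x)$ denotes the closed Euclidean ball of radius $\delta$ centered at $x$, and $\mathrm{dist}(x,\Sigma)=\inf_{y\in\Sigma}\|x-y\|$. The horn-neighbourhood of degree $r$ and width $\overline{w}>0$ is $\mathcal{H}_r^{\Sigma}(f,\overline{x};\overline{w}):=\{x\in\mathbb{R}^n\mid |f(x)-f(\overline{x})|\le\overline{w}\,\mathrm{dist}(x,\Sigma)^r\}$. *)

From HB Require Import structures.
From mathcomp Require Import all_boot all_order all_algebra.
From mathcomp Require Import all_classical all_reals all_analysis.
Set Implicit Arguments. Unset Strict Implicit. Unset Printing Implicit Defensive.
Import Order.TTheory GRing.Theory Num.Theory.
Import numFieldNormedType.Exports.
Local Open Scope classical_set_scope.
Local Open Scope ring_scope.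

Section Defs.
Variables (R : realType) (n : nat).

Definition enorm (x : 'rV[R]_n) : R := Num.sqrt (\sum_(i < n) x ord0 i ^+ 2).

Definition evec (i : 'I_n) : 'rV[R]_n := delta_mx ord0 i.

Definition partial (i : 'I_n) (g : 'rV[R]_n -> R) : 'rV[R]_n -> R :=
  fun x => 'D_(evec i) g x.

Fixpoint iter_partial (s : seq 'I_n) (g : 'rV[R]_n -> R) : 'rV[R]_n -> R :=
  match s with
  | [::] => g
  | i :: s' => partial i (iter_partial s' g)
  end.

Definition Cr_on (r : nat) (V : set 'rV[R]_n) (f : 'rV[R]_n -> R) : Prop :=
  (forall s : seq 'I_n, (size s < r)%N -> forall i : 'I_n, forall x, V x ->
     derivable (iter_partial s f) x (evec i)) /\
  (forall s : seq 'I_n, (size s <= r)%N -> forall x, V x ->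
     {for x, continuous (iter_partial s f)}).

Definition grad (f : 'rV[R]_n -> R) (x : 'rV[R]_n) : 'rV[R]_n :=
  \row_(i < n) partial i f x.

Definition cball (x : 'rV[R]_n) (d : R) : set 'rV[R]_n :=
  [set y | enorm (y - x) <= d].

Definition dist_to (x : 'rV[R]_n) (S : set 'rV[R]_n) : R :=
  inf [set enorm (x - y) | y in S].

Definition horn_nbhd (r : nat) (S : set 'rV[R]_n) (f : 'rV[R]_n -> R)
    (xbar : 'rV[R]_n) (w : R) : set 'rV[R]_n :=
  [set x | `|f x - f xbar| <= w * dist_to x S ^+ r].

Definition local_min (f : 'rV[R]_n -> R) (xbar : 'rV[R]_n) : Prop :=
  exists2 rho : R, 0 < rho & forall x, enorm (x - xbar) <= rho -> f xbar <= f x.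

End Defs.

From HB Require Import structures.
From mathcomp Require Import all_boot all_order all_algebra.
From mathcomp Require Import all_classical all_reals all_analysis.
From mathcomp Require Import ring lra.
Set Implicit Arguments. Unset Strict Implicit. Unset Printing Implicit Defensive.
Import Order.TTheory GRing.Theory Num.Theory.
Import numFieldNormedType.Exports.
Local Open Scope classical_set_scope.
Local Open Scope ring_scope.

(* At a local minimum of a C^2 function, a second-order Taylor bound along the
   i-th coordinate line, evaluated at the step -d_i f(x) / (2M), gives
   d_i f(x)^2 <= 4M (f(x) - f(xbar)) near xbar (M bounding d_ii f).  Summing,
   ||grad f(x)||^2 <= K (f(x) - f(xbar)), and since ||grad f|| <= B near xbar
   and r >= 2, ||grad f(x)||^r <= K B^(r-2) (f(x) - f(xbar)).  A perturbation
   with |h(x) - h(xbar)| <= eps ||grad f(x)||^r and eps K B^(r-2) < 1 is then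
   dominated by f(x) - f(xbar). *)

Section RealLine.
Variable R : realType.

Lemma MVT_closed (g dg : R -> R) (a b : R) : a <= b ->
  (forall s : R, a <= s <= b -> is_derive s 1 g (dg s)) ->
  exists2 xi, a <= xi <= b & g b - g a = dg xi * (b - a).
Proof.
move=> ab D.
have C : {within `[a, b], continuous g}.
  apply: derivable_within_continuous => s; rewrite in_itv /= => /D.
  by case.
have D' : forall s, s \in `]a, b[ -> is_derive s 1 g (dg s).
  by move=> s; rewrite in_itv /= => /andP[h1 h2]; apply: D; rewrite !ltW.
by have [xi] := MVT_segment ab D' C; rewrite in_itv /=; exists xi.
Qed.

Lemma MVT_from0 (g dg : R -> R) (a : R) :
  (forall s : R, `|s| <= `|a| -> is_derive s 1 g (dg s)) ->
  exists2 xi, `|xi| <= `|a| /\ 0 <= a * xi & g a - g 0 = dg xi * a.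
Proof.
move=> D; case: (leP 0 a) => a0.
- have [|xi /andP[x0 xa] E] := @MVT_closed g dg 0 a a0.
    move=> s /andP[s0 sa]; apply: D; rewrite !ger0_norm //; exact: le_trans sa.
  exists xi; last by rewrite E subr0.
  by rewrite !ger0_norm ?mulr_ge0 //; exact: le_trans xa.
- have [|xi /andP[ax x0] E] := @MVT_closed g dg a 0 (ltW a0).
    move=> s /andP[aS s0]; apply: D; rewrite !ler0_norm ?lerN2 //; exact: ltW.
  exists xi; last by rewrite -[g a - g 0]opprB E sub0r mulrN opprK.
  split; last by nra.
  by rewrite !ler0_norm ?lerN2 // ltW.
Qed.

Lemma taylor2_le (p p1 p2 : R -> R) (M a : R) : 0 <= M ->
  (forall s : R, `|s| <= `|a| ->
     [/\ is_derive s 1 p (p1 s), is_derive s 1 p1 (p2 s) & p2 s <= M]) ->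
  p a <= p 0 + a * p1 0 + M * a ^+ 2.
Proof.
move=> M0 H.
have [|xi [xa axi0] Ep] := @MVT_from0 p p1 a.
  by move=> s /H[].
have [|eta [ex _] Ep1] := @MVT_from0 p1 p2 xi.
  by move=> s sx; have [] := H s (le_trans sx xa).
have [_ _ p2M] := H eta (le_trans ex xa).
have axi_le : a * xi <= a ^+ 2.
  apply: le_trans (ler_norm _) _.
  by rewrite normrM -real_normK ?num_real // expr2 ler_wpM2l.
have : a * xi * p2 eta <= a * xi * M by rewrite ler_wpM2l.
nra.
Qed.

End RealLine.

Lemma is_derive_along_line (R : realType) (V : normedModType R) (f : V -> R)
    (x v : V) (s : R) :
  derivable f (x + s *: v) v ->
  is_derive s 1 (fun t => f (x + t *: v)) ('D_v f (x + s *: v)).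
Proof.
move=> df.
have E : (fun h : R => h^-1 *: (((fun t => f (x + t *: v)) \o shift s) (h *: 1)
                                  - f (x + s *: v)))
        = (fun h => h^-1 *: ((f \o shift (x + s *: v)) (h *: v) - f (x + s *: v))).
  apply/funext => h /=; congr (_ *: (f _ - _)).
  by rewrite -[h%:A]/(h * 1) mulr1 scalerDl addrCA.
split; rewrite /derivable /derive E //.
Qed.

Section Coordinates.
Variables (R : realType) (n : nat).
Implicit Types (x y v : 'rV[R]_n) (f : 'rV[R]_n -> R).

Lemma sqr_enorm v : enorm v ^+ 2 = \sum_(i < n) v ord0 i ^+ 2.
Proof. by rewrite sqr_sqrtr // sumr_ge0 // => i _; exact: sqr_ge0. Qed.

Lemma normr_coord_le_enorm v j : `|v ord0 j| <= enorm v.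
Proof.
rewrite -sqrtr_sqr /enorm ler_wsqrtr // (bigD1 j) //= lerDl.
by apply: sumr_ge0 => k _; exact: sqr_ge0.
Qed.

Lemma enorm_le_coord_bound v (c : R) : 0 <= c ->
  (forall j, `|v ord0 j| <= c) -> enorm v <= n.+1%:R * c.
Proof.
move=> c0 vc.
rewrite -[X in _ <= X]ger0_norm ?mulr_ge0 // -sqrtr_sqr /enorm ler_wsqrtr //.
apply: (@le_trans _ _ (\sum_(k < n) c ^+ 2)).
  apply: ler_sum => k _; rewrite -real_normK ?num_real //.
  by rewrite ler_pXn2r ?nnegrE.
rewrite sumr_const card_ord exprMn -[_ *+ n]mulr_natl ler_wpM2r ?sqr_ge0 //.
rewrite -natrX ler_nat.
by rewrite (leq_trans (leqnSn n)) // expnS leq_pmulr ?expn_gt0.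
Qed.

Lemma normr_coord_shift_evec_le x y i (s d : R) j :
  enorm (x - y) <= d -> `|s| <= d ->
  `|(x + s *: evec R i) ord0 j - y ord0 j| <= 2 * d.
Proof.
move=> xy sd; rewrite /evec !mxE eqxx /= addrAC mulr2n mulrDl mul1r.
apply: le_trans (ler_normD _ _) _; apply: lerD.
  by have := normr_coord_le_enorm (x - y) j; rewrite !mxE => /le_trans; apply.
rewrite normrM; case: (j == i); rewrite ?normr1 ?normr0 ?mulr1 ?mulr0 //.
exact: le_trans (normr_ge0 s) sd.
Qed.

Lemma sqr_partial_le f i x (fmin M : R) : 0 < M ->
  (forall s : R, `|s| <= `|partial i f x| / (2 * M) ->
    [/\ derivable f (x + s *: evec R i) (evec R i),
        derivable (partial i f) (x + s *: evec R i) (evec R i),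
        `|partial i (partial i f) (x + s *: evec R i)| <= M &
        fmin <= f (x + s *: evec R i)]) ->
  partial i f x ^+ 2 <= 4 * M * (f x - fmin).
Proof.
move=> M0 H.
set g := partial i f x; set a := - (g / (2 * M)).
have M2 : 0 < 2 * M by rewrite mulr_gt0.
have Ha : `|a| = `|g| / (2 * M) by rewrite normrN normrM normfV (gtr0_norm M2).
have [|_ _ _ fmin_le] := H a; first by rewrite Ha.
have := @taylor2_le R (fun t => f (x + t *: evec R i))
  (fun t => partial i f (x + t *: evec R i))
  (fun t => partial i (partial i f) (x + t *: evec R i)) M a (ltW M0).
rewrite !scale0r !addr0 -/g => T.
have {}T : f (x + a *: evec R i) <= f x - g ^+ 2 / (4 * M).
  have -> : f x - g ^+ 2 / (4 * M) = f x + a * g + M * a ^+ 2.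
    by rewrite /a; field; rewrite gt_eqF.
  apply: T => s; rewrite Ha => /H [d1 d2 b _]; split.
  - exact: is_derive_along_line d1.
  - exact: is_derive_along_line d2.
  - exact: le_trans (ler_norm _) b.
have : g ^+ 2 / (4 * M) <= f x - fmin by lra.
by rewrite ler_pdivrMr ?mulr_gt0 // mulrC.
Qed.

End Coordinates.

Lemma near_box (R : realType) (n : nat) (xbar : 'rV[R]_n) (P : 'rV[R]_n -> Prop) :
  (\forall y \near xbar, P y) ->
  exists2 e : R, 0 < e &
    forall y : 'rV[R]_n, (forall j, `|y ord0 j - xbar ord0 j| < e) -> P y.
Proof.
move=> /nbhs_ballP [e e0 He]; exists e => // y Hy; apply: He.
by split => // i j; rewrite (ord1 i) /ball /= distrC; exact: Hy.
Qed.

Lemma near_bounded_family (R : realType) (T : topologicalType) (I : finType)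
    (g : I -> T -> R) (x : T) :
  (forall i, {for x, continuous (g i)}) ->
  exists2 M : R, 0 < M & \forall y \near x, forall i, `|g i y| <= M.
Proof.
move=> gc; exists (1 + \sum_i (`|g i x| + 1)).
  by rewrite ltr_pwDl // sumr_ge0 // => i _; rewrite addr_ge0.
apply: filter_forall => i; have /cvgr_dist_lt/(_ 1 ltr01) := gc i.
apply: filterS => y gy.
have -> : g i y = g i x + (g i y - g i x) by rewrite addrC subrK.
apply: le_trans (ler_normD _ _) _; rewrite (bigD1 i) //=.
have : 0 <= \sum_(j | j != i) (`|g j x| + 1).
  by rewrite sumr_ge0 // => j _; rewrite addr_ge0.
by rewrite distrC in gy; lra.
Qed.

Lemma Cr_on_le (R : realType) (n r s : nat) (V : set 'rV[R]_n) (f : 'rV[R]_n -> R) :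
  (s <= r)%N -> Cr_on r V f -> Cr_on s V f.
Proof.
move=> sr [hd hc]; split=> t ht.
- exact: hd (leq_trans ht sr).
- exact: hc (leq_trans ht sr).
Qed.

Section LocalMinimum.
Variables (R : realType) (n : nat) (f : 'rV[R]_n -> R) (V : set 'rV[R]_n).
Variable xbar : 'rV[R]_n.
Hypotheses (hV : open V) (hxV : V xbar) (hf : Cr_on 2 V f).

Lemma near_C2_bounds : exists2 M : R, 0 < M &
  \forall y \near xbar, forall i,
    [/\ derivable f y (evec R i), derivable (partial i f) y (evec R i),
        `|partial i (partial i f) y| <= M & `|partial i f y| <= M].
Proof.
case: hf => hd hc.
have [M1 M1_gt0 near1] := @near_bounded_family R _ _ (fun i => partial i f) xbar
  (fun i => hc [:: i] isT xbar hxV).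
have [M2 M2_gt0 near2] := @near_bounded_family R _ _ (fun i => partial i (partial i f)) xbar
  (fun i => hc [:: i; i] isT xbar hxV).
exists (Num.max M1 M2); first by rewrite lt_max M1_gt0.
near=> y.
have Vy : V y by near: y; exact: hV.
have b1 : forall i, `|partial i f y| <= M1 by near: y.
have b2 : forall i, `|partial i (partial i f) y| <= M2 by near: y.
move=> i; split; [exact: hd [::] isT i y Vy | exact: hd [:: i] isT i y Vy | |].
- by rewrite le_max b2 orbT.
- by rewrite le_max b1.
Unshelve. all: end_near.
Qed.

Hypothesis hmin : local_min f xbar.

Lemma local_min_sqr_partial_le : exists d M : R, [/\ 0 < d, 0 < M &
  forall x, enorm (x - xbar) <= d -> [/\ f xbar <= f x,
    forall i, partial i f x ^+ 2 <= M * (f x - f xbar) &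
    forall i, `|partial i f x| <= M]].
Proof.
have [M M0 nearM] := near_C2_bounds.
have [e e0 boxM] := @near_box _ _ _ _ nearM.
case: hmin => rho rho0 minf.
have n0 : 0 < n.+1%:R :> R by rewrite ltr0Sn.
pose d := Num.min (e / 3) (rho / (2 * n.+1%:R)).
have d0 : 0 < d by rewrite lt_min !divr_gt0 ?mulr_gt0.
have de : 2 * d < e.
  have : d <= e / 3 by rewrite ge_min lexx.
  lra.
have drho : n.+1%:R * (2 * d) <= rho.
  have : d <= rho / (2 * n.+1%:R) by rewrite ge_min lexx orbT.
  rewrite ler_pdivlMr ?mulr_gt0 //; apply: le_trans.
  by rewrite mulrCA mulrA mulrC.
have d_rho : d <= rho.
  by apply: le_trans drho; rewrite -[d]mul1r ler_pM ?ler1n //; lra.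
pose N := M + M / d.
have N0 : 0 < N by rewrite ltr_wpDr ?divr_ge0 ?ltW.
exists d, (4 * N); split=> // [|x xd]; first by rewrite mulr_gt0.
have x_box j : `|x ord0 j - xbar ord0 j| < e.
  have := normr_coord_le_enorm (x - xbar) j; rewrite !mxE; lra.
have partial_le i : `|partial i f x| <= M by have [] := boxM x x_box i.
split=> [|i|i]; first exact: minf (le_trans xd d_rho).
- apply: (sqr_partial_le N0) => s sd.
  have {}sd : `|s| <= d.
    apply: le_trans sd _; rewrite ler_pdivrMr ?mulr_gt0 //.
    have -> : d * (2 * N) = 2 * M * d + 2 * M by rewrite /N; field; rewrite gt_eqF.
    have := partial_le i; nra.
  have y_box j := normr_coord_shift_evec_le i j xd sd.
  have [d1 d2 b _] := boxM _ (fun j => le_lt_trans (y_box j) de) i.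
  split=> //; first by apply: le_trans b _; rewrite lerDl divr_ge0 ?ltW.
  apply: minf; apply: le_trans drho; apply: enorm_le_coord_bound => //.
  + by rewrite mulr_ge0 ?ltW.
  + by move=> j; have := y_box j; rewrite !mxE.
- apply: le_trans (partial_le i) _.
  have : 0 <= M / d by rewrite divr_ge0 ?ltW.
  rewrite /N; lra.
Qed.

Lemma local_min_sqr_grad_le : exists d K B : R, [/\ 0 < d, 0 <= K, 0 <= B &
  forall x, enorm (x - xbar) <= d -> [/\ f xbar <= f x,
    enorm (grad f x) ^+ 2 <= K * (f x - f xbar) & enorm (grad f x) <= B]].
Proof.
have [d [M [d0 M0 hM]]] := local_min_sqr_partial_le.
exists d, (n%:R * M), (n.+1%:R * M).
split=> //; [by rewrite mulr_ge0 // ltW | by rewrite mulr_ge0 // ltW |].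
move=> x /hM[fx sqr_le le]; split=> //.
- rewrite sqr_enorm (eq_bigr (fun i => partial i f x ^+ 2)) => [|i _]; last by rewrite mxE.
  apply: le_trans (ler_sum _ (fun i _ => sqr_le i)) _.
  by rewrite sumr_const card_ord -[_ *+ n]mulr_natl mulrA.
- by apply: enorm_le_coord_bound => [|j]; [exact: ltW | rewrite mxE].
Qed.

End LocalMinimum.

Lemma perturbation_le (R : realType) (r : nat) (K B g df dh : R) :
  (2 <= r)%N -> 0 <= K -> 0 <= g <= B -> 0 <= df -> g ^+ 2 <= K * df ->
  `|dh| <= (K * B ^+ (r - 2) + 1)^-1 * g ^+ r -> - dh <= df.
Proof.
move=> r2 K0 /andP[g0 gB] df0 gK.
rewrite -[in g ^+ r](subnKC r2) exprD.
set P := B ^+ (r - 2); set Q := g ^+ (r - 2).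
have P0 : 0 <= P by rewrite exprn_ge0 // (le_trans g0).
have QP : Q <= P by rewrite lerXn2r ?nnegrE // (le_trans g0).
have KP1 : 0 < K * P + 1 by rewrite ltr_pwDr // mulr_ge0.
have gQ : g ^+ 2 * Q <= K * df * P by rewrite ler_pM ?sqr_ge0 ?exprn_ge0.
have : (K * P + 1)^-1 * (g ^+ 2 * Q) <= df.
  rewrite -ler_pdivlMl ?invr_gt0 // invrK; apply: le_trans gQ _; nra.
by move=> h /le_trans/(_ h); rewrite ler_norml lerNl => /andP[].
Qed.

Theorem corollary3p9 (R : realType) (n r : nat) (xbar : 'rV[R]_n)
  (f : 'rV[R]_n -> R) (V : set 'rV[R]_n)
  (hr : (2 <= r)%N) (hV : open V) (hxV : V xbar) (hf : Cr_on r V f)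
  (c delta w : R) (hc : 0 < c) (hdelta : 0 < delta) (hw : 0 < w) :
  let Sigma := [set x | V x /\ grad f x = 0] in
  (forall x, horn_nbhd r Sigma f xbar w x -> cball xbar delta x ->
     c * dist_to x Sigma ^+ r.-1 <= enorm (grad f x)) ->
  local_min f xbar ->
  exists2 eps : R, 0 < eps &
    forall h : 'rV[R]_n -> R,
      (exists2 rho : R, 0 < rho & forall x, cball xbar rho x ->
         `|h x - h xbar| <= eps * enorm (grad f x) ^+ r) ->
      local_min (fun x => f x + h x) xbar.
Proof.
move=> Sigma _ hmin.
have [d [K [B [d0 K0 B0 hbound]]]] :=
  local_min_sqr_grad_le hV hxV (Cr_on_le hr hf) hmin.
exists (K * B ^+ (r - 2) + 1)^-1.
  by rewrite invr_gt0 ltr_pwDr // mulr_ge0 // exprn_ge0.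
move=> h [rho rho0 hh]; exists (Num.min rho d); first by rewrite lt_min rho0.
move=> x; rewrite le_min => /andP[x_rho x_d].
have [fx gradK gradB] := hbound x x_d.
have gB : 0 <= enorm (grad f x) <= B by rewrite gradB andbT sqrtr_ge0.
have df0 : 0 <= f x - f xbar by rewrite subr_ge0.
have := perturbation_le hr K0 gB df0 gradK (hh x x_rho).
lra.
Qed.
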